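(* On the domain $B>0$, $\mathrm{FOV}\in(0,\pi/2]$, both $L_{\mathrm{ADR}}(B,\mathrm{FOV})$ and $A_{\mathrm{ADR}}(B,\mathrm{FOV})$ are strictly decreasing in $B$ (for fixed $\mathrm{FOV}$) and strictly decreasing in $\mathrm{FOV}$ (for fixed $B$).
   Context: Fix constants: an integer $N_{\mathrm{tier}}\ge1$; an integer $N_{\mathrm{PD}}\ge 1$; $\mathrm{FF}\in(0,1]$; $K_{\mathrm{PD}}>0$; $n_{\mathrm{CPC}}\ge 1$. The design variables are $B>0$ and $\mathrm{FOV}\in(0,\pi/2]$. Write $\theta=\theta_{\mathrm{CPC}}=\mathrm{FOV}/(2N_{\mathrm{tier}}+1)$. Set $K_1=\frac{1}{2K_{\mathrm{PD}}}\sqrt{N_{\mathrm{PD}}/\mathrm{FF}}$ and $K_2=\frac{\pi N_{\mathrm{PD}}n_{\mathrm{CPC}}^2}{4\,\mathrm{FF}\,K_{\mathrm{PD}}^2}$, and define the receiver height and top area $L_{\mathrm{ADR}}(B,\mathrm{FOV})=\frac{K_1}{B}\cdot\frac{n_{\mathrm{CPC}}+\sin\theta}{\sin\theta\,\tan\theta}$, $A_{\mathrm{ADR}}(B,\mathrm{FOV})=\frac{K_2}{B^2\sin^2\theta}\Big(1+\sum_{i=1}^{N_{\mathrm{tier}}}6i\cos(2i\theta)\Big)$. *)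

From Stdlib Require Import Reals Lra Lia.
Open Scope R_scope.

Definition theta_CPC (Ntier : nat) (FOV : R) : R := FOV / (2 * INR Ntier + 1).

Definition K1 (NPD : nat) (FF KPD : R) : R := / (2 * KPD) * sqrt (INR NPD / FF).

Definition K2 (NPD : nat) (FF KPD nCPC : R) : R :=
  PI * INR NPD * nCPC ^ 2 / (4 * FF * KPD ^ 2).

Definition L_ADR (Ntier NPD : nat) (FF KPD nCPC B FOV : R) : R :=
  let th := theta_CPC Ntier FOV in
  K1 NPD FF KPD / B * ((nCPC + sin th) / (sin th * tan th)).

(* sum_{i=1}^{Ntier} 6 i cos(2 i th), written as sum_{k=0}^{Ntier-1} with i = k+1 *)
Definition tier_sum (Ntier : nat) (th : R) : R :=
  sum_f_R0 (fun k => 6 * INR (S k) * cos (2 * INR (S k) * th)) (Ntier - 1).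

Definition A_ADR (Ntier NPD : nat) (FF KPD nCPC B FOV : R) : R :=
  let th := theta_CPC Ntier FOV in
  K2 NPD FF KPD nCPC / (B ^ 2 * sin th ^ 2) * (1 + tier_sum Ntier th).

(** Both quantities factor as a power of [1/B] times a function of
    [theta = FOV / (2 N_tier + 1)] alone, so monotonicity in [B] is immediate
    and monotonicity in [FOV] reduces to monotonicity in [theta].  Writing
    [(n + sin t) / (sin t tan t) = cos t * (n / sin t ^ 2 + 1 / sin t)] shows
    the height factor is a product of positive decreasing functions on
    [(0, pi/2)].  For the area factor, every angle [2 i theta] with [i <= N_tier]
    stays below [2 N_tier FOV / (2 N_tier + 1) < pi/2], so each [cos (2 i theta)]
    is nonnegative and nonincreasing while [1 / sin theta ^ 2] strictly decreases. *)

From Stdlib Require Import Reals Lra Lia Psatz.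
Open Scope R_scope.

Lemma K1_pos NPD FF KPD :
  (0 < NPD)%nat -> 0 < FF -> 0 < KPD -> 0 < K1 NPD FF KPD.
Proof.
  intros HN HFF HKPD; unfold K1.
  apply Rmult_lt_0_compat; [apply Rinv_0_lt_compat; lra|].
  apply sqrt_lt_R0, Rdiv_lt_0_compat; [apply lt_0_INR|]; assumption.
Qed.

Lemma K2_pos NPD FF KPD nCPC :
  (0 < NPD)%nat -> 0 < FF -> 0 < KPD -> nCPC <> 0 -> 0 < K2 NPD FF KPD nCPC.
Proof.
  intros HN HFF HKPD Hn; unfold K2.
  pose proof PI_RGT_0; pose proof (lt_0_INR _ HN).
  assert (0 < nCPC ^ 2) by (pose proof (pow2_ge_0 nCPC); pose proof (pow_nonzero nCPC 2 Hn); lra).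
  assert (0 < KPD ^ 2) by (apply pow_lt; exact HKPD).
  apply Rdiv_lt_0_compat; apply Rmult_lt_0_compat; nra.
Qed.

Lemma Rdiv_lt_contravar_pos c x y : 0 < c -> 0 < x -> x < y -> c / y < c / x.
Proof.
  intros Hc Hx Hxy; unfold Rdiv.
  apply Rmult_lt_compat_l, Rinv_0_lt_contravar; lra.
Qed.

Lemma le_two_INR_mul N t : (1 <= N)%nat -> 0 <= t -> t <= 2 * INR N * t.
Proof.
  intros HN Ht; apply le_INR in HN; simpl in HN; nra.
Qed.

Lemma theta_CPC_pos N FOV : 0 < FOV -> 0 < theta_CPC N FOV.
Proof.
  intros HF; unfold theta_CPC; pose proof (pos_INR N).
  apply Rdiv_lt_0_compat; lra.
Qed.

Lemma theta_CPC_lt N F1 F2 : F1 < F2 -> theta_CPC N F1 < theta_CPC N F2.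
Proof.
  intros HF; unfold theta_CPC, Rdiv; pose proof (pos_INR N).
  apply Rmult_lt_compat_r; [apply Rinv_0_lt_compat|]; lra.
Qed.

Lemma two_INR_mul_theta_CPC_lt N FOV : 0 < FOV -> 2 * INR N * theta_CPC N FOV < FOV.
Proof.
  intros HF; unfold theta_CPC; pose proof (pos_INR N).
  apply (Rmult_lt_reg_r (2 * INR N + 1)); [lra|].
  replace (2 * INR N * (FOV / (2 * INR N + 1)) * (2 * INR N + 1))
    with (2 * INR N * FOV) by (field; lra).
  nra.
Qed.

Lemma theta_CPC_range N FOV :
  (1 <= N)%nat -> 0 < FOV -> FOV <= PI / 2 ->
  0 < theta_CPC N FOV < PI / 2 /\ 2 * INR N * theta_CPC N FOV <= PI / 2.
Proof.
  intros HN HF0 HF1.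
  pose proof (theta_CPC_pos N FOV HF0).
  pose proof (two_INR_mul_theta_CPC_lt N FOV HF0).
  pose proof (le_two_INR_mul N (theta_CPC N FOV) HN ltac:(lra)).
  repeat split; lra.
Qed.

(** [tier_sum 0] is not the empty sum: [0 - 1 = 0] in [nat], and [sum_f_R0 f 0 = f 0];
    hence the hypothesis [1 <= N] below. *)
Lemma tier_angle_range N k t :
  (1 <= N)%nat -> (k <= N - 1)%nat -> 0 <= t -> 2 * INR N * t <= PI / 2 ->
  0 <= 2 * INR (S k) * t <= PI / 2.
Proof.
  intros HN Hk Ht Hlim.
  assert (INR (S k) <= INR N) by (apply le_INR; lia).
  pose proof (pos_INR (S k)); nra.
Qed.

Lemma tier_sum_nonneg N t :
  (1 <= N)%nat -> 0 <= t -> 2 * INR N * t <= PI / 2 -> 0 <= tier_sum N t.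
Proof.
  intros HN Ht Hlim; unfold tier_sum.
  rewrite <- (Rmult_0_l (INR (S (N - 1)))), <- sum_cte.
  apply sum_Rle; intros k Hk.
  pose proof (tier_angle_range N k t HN Hk Ht Hlim) as Hang.
  pose proof PI_RGT_0; pose proof (pos_INR (S k)).
  assert (0 <= cos (2 * INR (S k) * t)) by (apply cos_ge_0; lra).
  nra.
Qed.

Lemma tier_sum_antitone N t1 t2 :
  (1 <= N)%nat -> 0 <= t1 -> t1 <= t2 -> 2 * INR N * t2 <= PI / 2 ->
  tier_sum N t2 <= tier_sum N t1.
Proof.
  intros HN Ht1 Ht12 Hlim; unfold tier_sum.
  apply sum_Rle; intros k Hk.
  pose proof PI_RGT_0; pose proof (pos_INR (S k)); pose proof (pos_INR N).
  assert (Hlim1 : 2 * INR N * t1 <= PI / 2) by nra.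
  pose proof (tier_angle_range N k t1 HN Hk Ht1 Hlim1).
  pose proof (tier_angle_range N k t2 HN Hk ltac:(lra) Hlim).
  assert (cos (2 * INR (S k) * t2) <= cos (2 * INR (S k) * t1))
    by (apply cos_decr_1; nra).
  nra.
Qed.

Definition L_shape (n t : R) : R := (n + sin t) / (sin t * tan t).

Definition A_shape (N : nat) (t : R) : R := (1 + tier_sum N t) / sin t ^ 2.

Lemma L_ADR_eq Ntier NPD FF KPD nCPC B FOV :
  L_ADR Ntier NPD FF KPD nCPC B FOV
  = K1 NPD FF KPD / B * L_shape nCPC (theta_CPC Ntier FOV).
Proof. reflexivity. Qed.

Lemma A_ADR_eq Ntier NPD FF KPD nCPC B FOV :
  B <> 0 -> sin (theta_CPC Ntier FOV) <> 0 ->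
  A_ADR Ntier NPD FF KPD nCPC B FOV
  = K2 NPD FF KPD nCPC / B ^ 2 * A_shape Ntier (theta_CPC Ntier FOV).
Proof. intros HB Hs; unfold A_ADR, A_shape; field; auto. Qed.

Lemma L_shape_eq n t :
  0 < t < PI / 2 -> L_shape n t = cos t * (n / sin t ^ 2 + / sin t).
Proof.
  intros Ht; pose proof PI_RGT_0.
  assert (0 < sin t) by (apply sin_gt_0; lra).
  assert (0 < cos t) by (apply cos_gt_0; lra).
  unfold L_shape, tan; field; lra.
Qed.

Lemma L_shape_pos n t : 0 <= n -> 0 < t < PI / 2 -> 0 < L_shape n t.
Proof.
  intros Hn Ht; rewrite L_shape_eq by exact Ht; pose proof PI_RGT_0.
  assert (Hs : 0 < sin t) by (apply sin_gt_0; lra).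
  assert (0 < cos t) by (apply cos_gt_0; lra).
  assert (0 <= n / sin t ^ 2) by (apply Rle_mult_inv_pos; [|apply pow_lt]; lra).
  pose proof (Rinv_0_lt_compat _ Hs).
  apply Rmult_lt_0_compat; lra.
Qed.

Lemma L_shape_decreasing n t1 t2 :
  0 <= n -> 0 < t1 -> t1 < t2 -> t2 < PI / 2 -> L_shape n t2 < L_shape n t1.
Proof.
  intros Hn Ht1 Ht12 Ht2; rewrite !L_shape_eq by lra; pose proof PI_RGT_0.
  assert (Hs1 : 0 < sin t1) by (apply sin_gt_0; lra).
  assert (Hs : sin t1 < sin t2) by (apply sin_increasing_1; lra).
  assert (0 < cos t2) by (apply cos_gt_0; lra).
  assert (cos t2 < cos t1) by (apply cos_decreasing_1; lra).
  assert (Hsq : 0 < sin t1 ^ 2 < sin t2 ^ 2) by (split; [apply pow_lt|]; nra).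
  assert (n / sin t2 ^ 2 <= n / sin t1 ^ 2).
  { unfold Rdiv; apply Rmult_le_compat_l; [lra|].
    apply Rlt_le, Rinv_0_lt_contravar; lra. }
  assert (/ sin t2 < / sin t1) by (apply Rinv_0_lt_contravar; lra).
  assert (0 <= n / sin t2 ^ 2) by (apply Rle_mult_inv_pos; lra).
  pose proof (Rinv_0_lt_compat _ (Rlt_trans _ _ _ Hs1 Hs)).
  apply Rmult_le_0_lt_compat; lra.
Qed.

Lemma A_shape_pos N t :
  (1 <= N)%nat -> 0 < t -> 2 * INR N * t <= PI / 2 -> 0 < A_shape N t.
Proof.
  intros HN Ht Hlim; pose proof PI_RGT_0.
  pose proof (le_two_INR_mul N t HN ltac:(lra)).
  pose proof (tier_sum_nonneg N t HN ltac:(lra) Hlim).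
  assert (0 < sin t) by (apply sin_gt_0; lra).
  apply Rdiv_lt_0_compat; [lra | apply pow_lt; lra].
Qed.

Lemma A_shape_decreasing N t1 t2 :
  (1 <= N)%nat -> 0 < t1 -> t1 < t2 -> 2 * INR N * t2 <= PI / 2 ->
  A_shape N t2 < A_shape N t1.
Proof.
  intros HN Ht1 Ht12 Hlim; unfold A_shape, Rdiv; pose proof PI_RGT_0.
  pose proof (le_two_INR_mul N t2 HN ltac:(lra)).
  pose proof (tier_sum_nonneg N t2 HN ltac:(lra) Hlim).
  pose proof (tier_sum_antitone N t1 t2 HN ltac:(lra) ltac:(lra) Hlim).
  assert (Hs1 : 0 < sin t1) by (apply sin_gt_0; lra).
  assert (sin t1 < sin t2) by (apply sin_increasing_1; lra).
  assert (Hinv : / sin t2 ^ 2 < / sin t1 ^ 2)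
    by (apply Rinv_0_lt_contravar; [apply pow_lt|]; nra).
  assert (0 < / sin t2 ^ 2) by (apply Rinv_0_lt_compat, pow_lt; lra).
  nra.
Qed.

Theorem proposition2 (Ntier NPD : nat) (FF KPD nCPC : R)
  (hNtier : (1 <= Ntier)%nat) (hNPD : (1 <= NPD)%nat)
  (hFF0 : 0 < FF) (hFF1 : FF <= 1) (hKPD : 0 < KPD) (hn : 1 <= nCPC) :
  (* strictly decreasing in B, for each fixed FOV in (0, pi/2] *)
  (forall FOV B1 B2, 0 < FOV -> FOV <= PI / 2 -> 0 < B1 -> B1 < B2 ->
     L_ADR Ntier NPD FF KPD nCPC B2 FOV < L_ADR Ntier NPD FF KPD nCPC B1 FOV /\
     A_ADR Ntier NPD FF KPD nCPC B2 FOV < A_ADR Ntier NPD FF KPD nCPC B1 FOV) /\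
  (* strictly decreasing in FOV on (0, pi/2], for each fixed B > 0 *)
  (forall B F1 F2, 0 < B -> 0 < F1 -> F1 < F2 -> F2 <= PI / 2 ->
     L_ADR Ntier NPD FF KPD nCPC B F2 < L_ADR Ntier NPD FF KPD nCPC B F1 /\
     A_ADR Ntier NPD FF KPD nCPC B F2 < A_ADR Ntier NPD FF KPD nCPC B F1).
Proof.
  pose proof (K1_pos NPD FF KPD hNPD hFF0 hKPD) as HK1.
  pose proof (K2_pos NPD FF KPD nCPC hNPD hFF0 hKPD ltac:(lra)) as HK2.
  pose proof PI_RGT_0.
  split.
  - intros FOV B1 B2 HF0 HF1 HB1 HB12.
    destruct (theta_CPC_range Ntier FOV hNtier HF0 HF1) as [Ht Hlim].
    assert (Hs : 0 < sin (theta_CPC Ntier FOV)) by (apply sin_gt_0; lra).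
    rewrite !L_ADR_eq, !A_ADR_eq by lra.
    split; apply Rmult_lt_compat_r.
    + apply L_shape_pos; lra.
    + apply Rdiv_lt_contravar_pos; lra.
    + apply A_shape_pos; [assumption | lra | assumption].
    + apply Rdiv_lt_contravar_pos; [assumption | apply pow_lt; assumption | nra].
  - intros B F1 F2 HB HF1 HF12 HF2.
    destruct (theta_CPC_range Ntier F1 hNtier HF1 ltac:(lra)) as [Ht1 _].
    destruct (theta_CPC_range Ntier F2 hNtier ltac:(lra) HF2) as [Ht2 Hlim2].
    assert (0 < sin (theta_CPC Ntier F1)) by (apply sin_gt_0; lra).
    assert (0 < sin (theta_CPC Ntier F2)) by (apply sin_gt_0; lra).
    pose proof (theta_CPC_lt Ntier F1 F2 HF12).
    rewrite !L_ADR_eq, !A_ADR_eq by lra.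
    split; apply Rmult_lt_compat_l.
    + apply Rdiv_lt_0_compat; assumption.
    + apply L_shape_decreasing; lra.
    + apply Rdiv_lt_0_compat; [| apply pow_lt]; assumption.
    + apply A_shape_decreasing; [assumption | lra | lra | assumption].
Qed.
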